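(* Let $n\ge2$ be even, $r\ge1$, $V=\{1,\dots,n\}$, $R=\{n+1,\dots,n+r\}$, and let $G^R$ be a graph on $V\cup R$ with $G$ its induced subgraph on $V$. Let $M_0$ be a perfect matching of $G$ and let $F$ be an RC-rooted spanning forest of $G^R$ compatible with $M_0$, with cycles $C_1,\dots,C_{k}$ ($k\ge0$). For $(\varepsilon_1,\dots,\varepsilon_k)\in\{0,1\}^k$, let $M^{(\varepsilon_1,\dots,\varepsilon_k)}$ be the edge set consisting of: the edges of $M_0$ lying on branches of $F$ (i.e. not on cycles); for each $j$ with $\varepsilon_j=0$, the edges of $M_0$ on $C_j$; for each $j$ with $\varepsilon_j=1$, the edges of $F\setminus M_0$ on $C_j$ (and $M^{()}=M_0$ if $k=0$). Then for every $(\varepsilon_1,\dots,\varepsilon_k)\in\{0,1\}^k$, $M^{(\varepsilon_1,\dots,\varepsilon_k)}$ is a perfect matching of $G$.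
   Context: An RC-rooted spanning forest (RCRSF) of $G^R$ is a set of oriented edges of $G^R$ spanning the vertices of $V$ such that each connected component is either a tree rooted at a vertex of $R$, or a tree rooted on a cycle of $G$ (a unicycle); edges of components are oriented towards the root, and cycles are oriented in one of the two directions. An RCRSF $F$ is compatible with $M_0$ if it consists of the $n/2$ edges of $M_0$ together with $n/2$ edges of $G^R$ not in $M_0$, and moreover every cycle of its unicycles has even length $\ge4$ and alternates between edges of $M_0$ and edges of $F\setminus M_0$. *)

From mathcomp Require Import all_boot.
Set Implicit Arguments. Unset Strict Implicit. Unset Printing Implicit Defensive.

Section Defs.
Variable T : finType.

Definition simple_graph (e : rel T) := symmetric e /\ irreflexive e.

Definition und (a : T * T) : {set T} := [set a.1; a.2].

Definition edge_in (e : rel T) (V : {set T}) (m : {set T}) : Prop :=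
  exists u v, [/\ m = [set u; v], u != v, e u v, u \in V & v \in V].

Definition perfect_matching (e : rel T) (V : {set T}) (M : {set {set T}}) :=
  (forall m, m \in M -> edge_in e V m) /\
  (forall x, x \in V -> #|[set m in M | x \in m]| = 1).

Definition Frel (F : {set T * T}) : rel T := fun x y => (x, y) \in F.

(* RC-rooted spanning forest of G^R (vertex set V u R = T), given as its set
   of oriented edges, oriented towards the roots: every vertex of V has exactly
   one outgoing edge, roots (vertices of R) have none, every edge is an edge of
   G^R, and no edge is used in both directions (so the cycles of the unicycles
   are genuine cycles of G, of length >= 3).  Each weak component is then
   either a tree rooted at a vertex of R or a unicycle. *)
Definition RCRSF (e : rel T) (V R : {set T}) (F : {set T * T}) :=
  [/\ forall a, a \in F -> e a.1 a.2,
      forall x, x \in V -> #|[set y | (x, y) \in F]| = 1,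
      forall x y, x \in R -> (x, y) \notin F
    & forall x y, (x, y) \in F -> (y, x) \notin F].

Definition cyclic (F : {set T * T}) (x : T) : bool :=
  [exists y, ((x, y) \in F) && connect (Frel F) y x].

Definition cycle_of (F : {set T * T}) (x : T) : {set T} :=
  [set y | connect (Frel F) x y && connect (Frel F) y x].

Definition cycles (F : {set T * T}) : {set {set T}} :=
  [set cycle_of F x | x in [set x | cyclic F x]].

Definition on_cycle (F : {set T * T}) (m C : {set T}) : bool :=
  [exists a in F, (und a == m) && (a.1 \in C) && (a.2 \in C)].

Definition compatible (n : nat) (F : {set T * T}) (M0 : {set {set T}}) :=
  [/\ forall m, m \in M0 -> exists2 a, a \in F & und a = m,
      #|[set a in F | und a \in M0]| = n./2,
      #|[set a in F | und a \notin M0]| = n./2,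
      forall C, C \in cycles F -> ~~ odd #|C| /\ 4 <= #|C|
    & forall u v w, cyclic F u -> (u, v) \in F -> (v, w) \in F ->
        (und (u, v) \in M0) != (und (v, w) \in M0)].

(* M^(eps): S is the set of cycles C_j with eps_j = 1. *)
Definition M_eps (F : {set T * T}) (M0 : {set {set T}}) (S : {set {set T}})
  : {set {set T}} :=
  [set m | [|| (m \in M0) && ~~ [exists C in cycles F, on_cycle F m C],
              [exists C in cycles F, (C \notin S) && (m \in M0) && on_cycle F m C]
            | [exists C in cycles F, (C \in S) && (m \notin M0) && on_cycle F m C]]].

End Defs.

Definition Vset (n r : nat) : {set 'I_(n + r)} := [set x : 'I_(n + r) | x < n].
Definition Rset (n r : nat) : {set 'I_(n + r)} := [set x : 'I_(n + r) | n <= x].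

From mathcomp Require Import all_boot.

Set Implicit Arguments.
Unset Strict Implicit.
Unset Printing Implicit Defensive.

(* Every vertex of V has exactly one outgoing edge in F, so F is the graph of
   a successor map and each cyclic vertex x lies on exactly two edges of its
   cycle, {pred x, x} and {x, succ x}; compatibility says exactly one of them
   is in M0.  For a vertex x off the cycles, M^eps contains exactly the M0-edge
   at x.  For x on a cycle C, that M0-edge is one of the two cycle edges at x,
   and M^eps keeps the M0 cycle edge if C is not flipped and the other one
   otherwise: in both cases exactly one edge of M^eps contains x. *)

Section Cycles.
Variables (T : finType) (F : {set T * T}).

Lemma cycle_of_eq y z : y \in cycle_of F z -> cycle_of F y = cycle_of F z.
Proof.
rewrite inE => /andP [zy yz]; apply/setP => w; rewrite !inE.
apply/andP/andP => [[yw wy]|[zw wz]]; split.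
- exact: connect_trans zy yw.
- exact: connect_trans wy yz.
- exact: connect_trans yz zw.
- exact: connect_trans wz zy.
Qed.

Lemma cyclic_cycle_of y z : cyclic F z -> y \in cycle_of F z -> cyclic F y.
Proof.
move=> zc; have [-> //|nyz] := eqVneq y z.
rewrite inE => /andP [zy /connectP [[|w p] /= yp yz]].
  by rewrite yz eqxx in nyz.
case/andP: yp => yw wp; apply/existsP; exists w; apply/andP; split=> //.
by apply: connect_trans zy; apply/connectP; exists p.
Qed.

Lemma on_cycle_mem m C x : C \in cycles F -> on_cycle F m C -> x \in m ->
  cyclic F x /\ C = cycle_of F x.
Proof.
case/imsetP => z; rewrite inE => zc ->.
case/existsP => a /andP [_ /andP [/andP [/eqP <- a1] a2]].
rewrite !inE => /orP [] /eqP ->.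
- by split; [exact: cyclic_cycle_of a1 | rewrite (cycle_of_eq a1)].
- by split; [exact: cyclic_cycle_of a2 | rewrite (cycle_of_eq a2)].
Qed.

End Cycles.

Section Successor.
Variables (T : finType) (F : {set T * T}).
Hypothesis F_functional : forall x y z, (x, y) \in F -> (x, z) \in F -> y = z.

Definition succ x := odflt x [pick y | (x, y) \in F].

Lemma succ_edge x y : (x, y) \in F -> succ x = y.
Proof.
rewrite /succ => xy; case: pickP => [w xw|/(_ y)]; last by rewrite xy.
exact: F_functional xw xy.
Qed.

Lemma succ_out x : (x, succ x) \notin F -> succ x = x.
Proof. by rewrite /succ; case: pickP => [w /= ->|]. Qed.

Lemma connect_succ : connect (Frel F) =2 fconnect succ.
Proof.
move=> x y; apply/idP/idP; apply: connect_sub => u v.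
- by move/succ_edge <-; exact: fconnect1.
- move/eqP <-; have [uv|nuv] := boolP ((u, succ u) \in F); first exact: connect1.
  by rewrite succ_out.
Qed.

Lemma cyclicE x : cyclic F x = ((x, succ x) \in F) && fconnect succ (succ x) x.
Proof.
apply/existsP/andP => [[y /andP [xy yx]]|[xs sx]].
- by rewrite (succ_edge xy) -connect_succ.
- by exists (succ x); rewrite xs connect_succ.
Qed.

(* The predecessor of x on its cycle; x may also have predecessors on trees. *)
Definition cpred x := prev (orbit succ x) x.

Definition cycle_edges x : {set {set T}} := [set [set cpred x; x]; [set x; succ x]].

Section CyclicVertex.
Variable x : T.
Hypothesis x_cyclic : cyclic F x.

Let x_succ : (x, succ x) \in F.
Proof. by move: x_cyclic; rewrite cyclicE => /andP []. Qed.

Let succ_x_x : fconnect succ (succ x) x.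
Proof. by move: x_cyclic; rewrite cyclicE => /andP []. Qed.

Let orbit_fcycle : fcycle succ (orbit succ x).
Proof. exact: (orbitPcycle 2 0).1 succ_x_x. Qed.

Let cpred_orbit : cpred x \in orbit succ x.
Proof. by rewrite mem_prev in_orbit. Qed.

Lemma succ_cpred : succ (cpred x) = x.
Proof. exact/eqP/(prev_cycle orbit_fcycle)/in_orbit. Qed.

Lemma cpred_cycle_of : cpred x \in cycle_of F x.
Proof.
rewrite inE !connect_succ fconnect_orbit cpred_orbit /=.
by rewrite -{2}succ_cpred fconnect1.
Qed.

Lemma cpred_edge : (cpred x, x) \in F.
Proof.
have [|out] := boolP ((cpred x, succ (cpred x)) \in F); first by rewrite succ_cpred.
have px : cpred x = x by rewrite -[RHS]succ_cpred (succ_out out).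
by rewrite px; move: x_succ; rewrite -{2}px succ_cpred.
Qed.

Lemma cpred_unique q : q \in cycle_of F x -> (q, x) \in F -> q = cpred x.
Proof.
rewrite inE connect_succ fconnect_orbit => /andP [qO _] /succ_edge qx.
apply: ((orbitPcycle 0 5).1 orbit_fcycle) => //.
by rewrite qx succ_cpred.
Qed.

Lemma on_cycle_throughE (m C : {set T}) : x \in m ->
  (C \in cycles F) && on_cycle F m C = (C == cycle_of F x) && (m \in cycle_edges x).
Proof.
move=> xm; have xC : x \in cycle_of F x by rewrite inE connect0.
apply/andP/andP => [[CF mC]|[/eqP -> me]].
  have [_ CE] := on_cycle_mem CF mC xm; rewrite CE eqxx in mC *; split=> //.
  case/existsP: mC => [[u v]] /andP [uv /andP [/andP [/eqP um uC] _]] /=.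
  subst m; move: xm; rewrite /und /= !inE => /orP [] /eqP xE.
  - by rewrite -xE in uv *; rewrite (succ_edge uv) eqxx orbT.
  - by rewrite -xE in uv uC *; rewrite -(cpred_unique uC uv) eqxx.
split; first by apply: imset_f; rewrite inE.
apply/existsP; move: me; rewrite !inE => /orP [] /eqP ->.
- by exists (cpred x, x); rewrite cpred_edge eqxx cpred_cycle_of xC.
- exists (x, succ x); rewrite x_succ eqxx xC inE /= !connect_succ fconnect1.
  exact: succ_x_x.
Qed.

End CyclicVertex.
End Successor.

Lemma cards_alternating_pair (T : finType) (A : {set T}) (a b : T) (c : bool) :
  (a \in A) != (b \in A) -> #|[set z in [set a; b] | (z \in A) == c]| = 1.
Proof.
move=> ab; apply/eqP/cards1P.
have nab : a != b by apply: contraNneq ab => ->.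
exists (if (a \in A) == c then a else b); apply/setP => z; rewrite !inE.
have [->|za] := eqVneq z a; last have [->|zb] := eqVneq z b.
- by case: ifP; rewrite ?eqxx ?(negbTE nab) //= => ->.
- by rewrite /= (eq_sym b); move: ab; case: (a \in A); case: (b \in A); case: c;
    rewrite //= ?eqxx ?(negbTE nab).
- by case: ifP => _; rewrite /= ?(negbTE za) ?(negbTE zb).
Qed.

Lemma perfect_matching_uniq (T : finType) (e : rel T) (V : {set T})
    (M : {set {set T}}) x m m' :
  perfect_matching e V M -> x \in V -> m \in M -> m' \in M -> x \in m -> x \in m' ->
  m = m'.
Proof.
case=> _ deg xV mM m'M xm xm'; have /eqP/cards1P [m0 Mx] := deg x xV.
have : m \in [set m in M | x \in m] by rewrite inE mM.
have : m' \in [set m in M | x \in m] by rewrite inE m'M.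
by rewrite Mx => /set1P -> /set1P ->.
Qed.

Section Matching.
Variables (T : finType) (e : rel T) (V : {set T}).
Variables (F : {set T * T}) (M0 S : {set {set T}}).
Hypothesis F_functional : forall x y z, (x, y) \in F -> (x, z) \in F -> y = z.
Hypothesis F_source : forall x y, (x, y) \in F -> x \in V.
Hypothesis F_edge : forall a, a \in F -> e a.1 a.2.
Hypothesis e_irr : irreflexive e.
Hypothesis M0_matching : perfect_matching e V M0.
Hypothesis M0_alternating : forall u v w, cyclic F u -> (u, v) \in F -> (v, w) \in F ->
  (und (u, v) \in M0) != (und (v, w) \in M0).

Lemma cyclic_in_V x : cyclic F x -> x \in V.
Proof. by case/existsP => y /andP [/F_source]. Qed.

Lemma exists_on_cycle_through x (m : {set T}) (P : pred {set T}) :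
  cyclic F x -> x \in m ->
  [exists C in cycles F, P C && on_cycle F m C] =
  P (cycle_of F x) && (m \in cycle_edges F x).
Proof.
move=> xc xm; apply/existsP/andP => [[C /and3P [CF PC mC]]|[Px me]].
  have := on_cycle_throughE F_functional xc C xm.
  by rewrite CF mC => /esym/andP [/eqP <-].
exists (cycle_of F x); have := on_cycle_throughE F_functional xc (cycle_of F x) xm.
by rewrite eqxx me Px => /andP [-> ->].
Qed.

Lemma no_cycle_through x (m C : {set T}) :
  ~~ cyclic F x -> x \in m -> C \in cycles F -> on_cycle F m C = false.
Proof.
move=> xc xm CF; apply/negbTE/negP => mC.
by have [] := on_cycle_mem CF mC xm; rewrite (negbTE xc).
Qed.

Lemma mem_cycle_edges x (m : {set T}) : m \in cycle_edges F x -> x \in m.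
Proof. by rewrite !inE => /orP [] /eqP ->; rewrite !inE eqxx ?orbT. Qed.

Lemma cycle_edges_alternating x : cyclic F x ->
  ([set cpred F x; x] \in M0) != ([set x; succ F x] \in M0).
Proof.
move=> xc; have xs : (x, succ F x) \in F by move: xc; rewrite cyclicE // => /andP [].
have pc := cyclic_cycle_of xc (cpred_cycle_of F_functional xc).
exact: M0_alternating pc (cpred_edge F_functional xc) xs.
Qed.

Lemma M0_edge_cyclic x (m : {set T}) :
  cyclic F x -> m \in M0 -> x \in m -> m \in cycle_edges F x.
Proof.
move=> xc mM xm; have alt := cycle_edges_alternating xc.
have xV := cyclic_in_V xc.
set mp := [set cpred F x; x] in alt; set ms := [set x; succ F x] in alt.
have [mpM|mpM] := boolP (mp \in M0).
- by rewrite (perfect_matching_uniq M0_matching xV mM mpM xm) ?inE ?eqxx ?orbT.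
- have msM : ms \in M0 by move: alt; rewrite (negbTE mpM); case: (ms \in M0).
  by rewrite (perfect_matching_uniq M0_matching xV mM msM xm) ?inE ?eqxx ?orbT.
Qed.

Lemma M_eps_edge (m : {set T}) : m \in M_eps F M0 S -> edge_in e V m.
Proof.
case: M0_matching => M0_edge _.
rewrite inE => /or3P [/andP [mM _]|/existsP [C /and3P [_ /andP [_ mM] _]]|];
  try exact: M0_edge.
case/existsP => C /and3P [CF _ mC].
case/existsP: (mC) => a /andP [aF /andP [/andP [/eqP am _] _]].
have aV y : y \in m -> y \in V by move=> ym; have [/cyclic_in_V] := on_cycle_mem CF mC ym.
exists a.1, a.2; split; rewrite ?aV -?am ?inE ?eqxx ?orbT //; last exact: F_edge.
by apply: contraTneq (F_edge aF) => ->; rewrite e_irr.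
Qed.

Lemma mem_M_eps_acyclic x (m : {set T}) : ~~ cyclic F x -> x \in m ->
  (m \in M_eps F M0 S) = (m \in M0).
Proof.
move=> xc xm; rewrite inE; apply/or3P/idP => [[/andP [] //| |]|mM];
  try by case/existsP => C /and3P [CF _]; rewrite (no_cycle_through xc xm CF).
apply: Or31; rewrite mM; apply/existsP => [[C /andP [CF]]].
by rewrite (no_cycle_through xc xm CF).
Qed.

Lemma mem_M_eps_cyclic x (m : {set T}) : cyclic F x -> x \in m ->
  (m \in M_eps F M0 S) =
  (m \in cycle_edges F x) && ((m \in M0) == (cycle_of F x \notin S)).
Proof.
move=> xc xm; have onC := exists_on_cycle_through xpredT xc xm; rewrite /= in onC.
rewrite inE onC (exists_on_cycle_through (fun C => (C \notin S) && (m \in M0)) xc xm).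
rewrite (exists_on_cycle_through (fun C => (C \in S) && (m \notin M0)) xc xm) /=.
have := @M0_edge_cyclic x m xc.
by case: (m \in M0); case: (m \in cycle_edges F x); case: (_ \in S) => // /(_ isT xm).
Qed.

Lemma M_eps_deg x : x \in V -> #|[set m in M_eps F M0 S | x \in m]| = 1.
Proof.
move=> xV; have [xc|xc] := boolP (cyclic F x).
- rewrite -(cards_alternating_pair (cycle_of F x \notin S) (cycle_edges_alternating xc)).
  rewrite -/(cycle_edges F x); apply: eq_card => m; rewrite [LHS]in_set [RHS]in_set.
  have [xm|xm] := boolP (x \in m); first by rewrite andbT (mem_M_eps_cyclic xc xm).
  by rewrite andbF (contraNF (@mem_cycle_edges x m) xm).
- case: M0_matching => _ deg; rewrite -(deg x xV); apply: eq_card => m.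
  rewrite [LHS]in_set [RHS]in_set; have [xm|_] := boolP (x \in m); last by rewrite !andbF.
  by rewrite (mem_M_eps_acyclic xc xm).
Qed.

End Matching.

Section RootedForest.
Variables (T : finType) (e : rel T) (V : {set T}) (F : {set T * T}).
Hypothesis F_forest : RCRSF e V (~: V) F.

Lemma RCRSF_source x y : (x, y) \in F -> x \in V.
Proof.
by case: F_forest => _ _ root _; apply: contraTT => xR; apply: root; rewrite inE.
Qed.

Lemma RCRSF_functional x y z : (x, y) \in F -> (x, z) \in F -> y = z.
Proof.
move=> xy xz; case: F_forest => _ out _ _.
have /eqP/cards1P [w Fx] := out x (RCRSF_source xy).
have : y \in [set y | (x, y) \in F] by rewrite inE.
have : z \in [set y | (x, y) \in F] by rewrite inE.
by rewrite Fx => /set1P -> /set1P ->.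
Qed.

End RootedForest.

Lemma Rset_setC n r : Rset n r = ~: Vset n r.
Proof. by apply/setP => x; rewrite !inE leqNgt. Qed.

Theorem lemma6 (n r : nat) (e : rel 'I_(n + r))
    (F : {set 'I_(n + r) * 'I_(n + r)}) (M0 : {set {set 'I_(n + r)}}) :
  2 <= n -> ~~ odd n -> 1 <= r ->
  simple_graph e ->
  perfect_matching e (Vset n r) M0 ->
  RCRSF e (Vset n r) (Rset n r) F ->
  compatible n F M0 ->
  forall S : {set {set 'I_(n + r)}}, S \subset cycles F ->
    perfect_matching e (Vset n r) (M_eps F M0 S).
Proof.
move=> _ _ _ [_ e_irr] M0_matching; rewrite Rset_setC => F_forest [_ _ _ _ alt] S _.
have F_functional := RCRSF_functional F_forest.
have F_source := RCRSF_source F_forest.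
have [F_edge _ _ _] := F_forest.
split=> [m|x].
- exact: (M_eps_edge F_source F_edge e_irr M0_matching).
- exact: (M_eps_deg S F_functional F_source M0_matching alt).
Qed.
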